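(* Let $s_0\in(0,1)$ and let $\varphi:[0,\infty)\to(0,\infty)$ be a deterministic (measurable) function with $\int_0^\infty\varphi(s)\,ds<\infty$. Let $(P_t)_{t\ge0}$ be a stochastic process with almost surely continuous, positive sample paths such that $\sup_{t\ge0}\mathbb{E}[P_t]\le M<\infty$ for some constant $M$. Set $\beta_t=\varphi(t)P_t$ and let $(S_t)_{t\ge0}$ be the solution of $$\frac{dS_t}{dt}=-\beta_t S_t(1-S_t),\qquad S_0=s_0,$$ namely $S_t=\left[1+\left(\frac{1}{s_0}-1\right)\exp\left(\int_0^t\beta_r\,dr\right)\right]^{-1}$. Then the limit $S_\infty=\lim_{t\to\infty}S_t$ satisfies $S_\infty\in(0,s_0)$ almost surely.
   Context: This is an SI epidemic model with population normalized to one; $S_t$ is the susceptible fraction, $\varphi$ models a public health intervention and $P_t$ the random transmission rate in the absence of intervention. The intervention is called successful when $\int_0^\infty\varphi(s)\,ds<\infty$. *)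

From HB Require Import structures.
From mathcomp Require Import all_boot all_order all_algebra.
From mathcomp Require Import all_classical all_reals all_analysis.
Set Implicit Arguments. Unset Strict Implicit. Unset Printing Implicit Defensive.
Import Order.TTheory GRing.Theory Num.Theory.
Local Open Scope classical_set_scope.
Local Open Scope ring_scope.

(* Susceptible fraction, given by the explicit solution of the logistic ODE
   dS/dt = - beta_t S (1 - S), S_0 = s0, with beta_r = phi r * P r w:
   S_t(w) = [1 + (1/s0 - 1) exp(int_0^t beta_r dr)]^-1 . *)
Definition SI_S {R : realType} {Omega : Type} (s0 : R) (phi : R -> R)
  (P : R -> Omega -> R) (t : R) (w : Omega) : R :=
  (1 + (s0^-1 - 1) *
     expR (Rintegral (@lebesgue_measure R) `[0%R, t] (fun r => phi r * P r w)))^-1.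

From HB Require Import structures.
From mathcomp Require Import all_boot all_order all_algebra.
From mathcomp Require Import all_classical all_reals all_analysis.
From mathcomp Require Import measurable_realfun.
Import Order.TTheory GRing.Theory Num.Theory numFieldNormedType.Exports.
Import Num.Def.
Local Open Scope classical_set_scope.
Local Open Scope ring_scope.

(* P is not assumed jointly measurable, so the path integral
   J(w) = int_0^oo phi(r) P_r(w) dr cannot be integrated in w directly.
   Sampling each path on the grid of mesh 1/(k+1) over [0, k) gives integrals
   F_k(w) that are finite combinations of the measurable P_t, with
   E[F_k] <= M int phi; by Fatou, G = liminf_k F_k has finite expectation.
   Continuity of the paths makes the step functions converge to P(w), and
   Fatou again gives J(w) <= G(w). So J(w) is almost surely finite, and it is
   positive, hence S_t(w) decreases to [1 + (1/s0 - 1) exp J(w)]^-1, which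
   lies in (0, s0). *)

Section grid.
Context {R : realType}.

Definition gridpt (k j : nat) : R := j%:R / k.+1%:R.

Definition gridcell (k j : nat) : set R := `[gridpt k j, gridpt k j.+1[.

Definition step_fun (k : nat) (x : nat -> R) (r : R) : R :=
  \sum_(j < k * k.+1) \1_(gridcell k j) r * x j.

Lemma gridpt_ge0 k j : 0 <= gridpt k j.
Proof. by rewrite /gridpt divr_ge0. Qed.

Lemma gridcellP k j r : gridcell k j r <-> j%:R <= r * k.+1%:R < j.+1%:R.
Proof.
rewrite /gridcell /gridpt /= in_itv /=.
by rewrite !ler_pdivrMr ?ltr0n // !ltr_pdivlMr ?ltr0n // ?ler_pdivlMr.
Qed.

Lemma step_funE k x r : 0 <= r ->
  step_fun k x r = if r < k%:R then x (truncn (r * k.+1%:R)) else 0.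
Proof.
move=> r0; have k0 : (0 : R) < k.+1%:R by rewrite ltr0n.
have rk0 : 0 <= r * k.+1%:R by rewrite mulr_ge0 // ltW.
rewrite /step_fun; case: ifPn => rk.
  have jk : (truncn (r * k.+1%:R) < k * k.+1)%N.
    by rewrite truncn_lt_nat // natrM ltr_pM2r.
  rewrite (bigD1 (Ordinal jk)) //= big1 ?addr0.
    by rewrite indicE mem_set ?mul1r //; apply/gridcellP; exact: truncn_itv.
  move=> j /eqP jne; rewrite indicE memNset ?mul0r // => /gridcellP/truncn_def jE.
  by apply: jne; apply: val_inj; rewrite /= jE.
rewrite big1 // => j _; rewrite indicE memNset ?mul0r // => /gridcellP/andP[_ rj].
have jk : (j.+1%:R : R) <= k%:R * k.+1%:R by rewrite -natrM ler_nat.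
by move: (lt_le_trans rj jk); rewrite ltr_pM2r // (negbTE rk).
Qed.

Lemma step_fun_ge0 k x r : (forall j, 0 <= x j) -> 0 <= step_fun k x r.
Proof. by move=> x0; apply: sumr_ge0 => j _; rewrite mulr_ge0 ?indicE. Qed.

Lemma measurable_step_fun D k x : measurable_fun D (step_fun k x).
Proof.
rewrite /step_fun; apply: measurable_sum => j; apply: measurable_funM => //.
by apply: measurable_indic; rewrite /gridcell; exact: measurable_itv.
Qed.

Lemma gridpt_truncn_cvg (r : R) : 0 <= r ->
  gridpt k (truncn (r * k.+1%:R)) @[k --> \oo] --> r.
Proof.
move=> r0; apply: (@squeeze_cvgr _ _ _ _ (fun k => r - harmonic k) (cst r)).
- apply: nearW => k /=; have k0 : (0 : R) < k.+1%:R by rewrite ltr0n.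
  have /andP[lo hi] := truncn_itv (mulr_ge0 r0 (ltW k0)).
  rewrite /gridpt ler_pdivrMr // lo andbT ler_pdivlMr // mulrBl mulVf ?gt_eqF //.
  by rewrite lerBlDr natr1 ltW.
- rewrite -[X in _ --> X]subr0; apply: cvgB; [exact: cvg_cst|exact: cvg_harmonic].
- exact: cvg_cst.
Qed.

Lemma step_fun_cvg (f : R -> R) (r : R) :
  {within `[0, +oo[, continuous f} -> 0 <= r ->
  step_fun k (f \o gridpt k) r @[k --> \oo] --> f r.
Proof.
move=> cf r0; pose a k := gridpt k (truncn (r * k.+1%:R)).
have a_within : a @ \oo --> within `[0, +oo[ (nbhs r).
  move=> U /(gridpt_truncn_cvg r r0)[i _ aU]; exists i => // k ik.
  by apply: aU; rewrite //= in_itv /= gridpt_ge0.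
have fr : f x @[x --> within `[0, +oo[ (nbhs r)] --> f r.
  by apply: (proj1 (subspace_continuousP _ _) cf); rewrite /= in_itv /= r0.
apply: cvg_trans (cvg_trans (cvg_app f a_within) fr); apply: near_eq_cvg.
near=> k; rewrite step_funE // ifT //.
near: k; exists (truncn r).+1 => // k /= rk.
by apply: lt_le_trans (real_truncnS_gt (num_real r)) _; rewrite ler_nat.
Unshelve. all: by end_near.
Qed.

End grid.

Section ereal_lemmas.
Local Open Scope ereal_scope.

Lemma lee_limn_einf {R : realType} (u v : (\bar R)^nat) :
  (forall n, u n <= v n) -> limn_einf u <= limn_einf v.
Proof.
move=> uv; rewrite !limn_einf_lim; apply: lee_lim; [exact: is_cvg_einfs..|].
apply: nearW => n; apply: le_ereal_inf_tmp => _ [k /= nk <-].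
by apply: le_trans (uv k); apply: ereal_inf_lbound; exists k.
Qed.

Lemma limn_einf_cst {R : realType} (c : \bar R) : limn_einf (fun=> c) = c.
Proof. by have [] := @cvg_limn_einf_sup R (fun=> c) c (cvg_cst c). Qed.

Lemma integral_gt0 {d} {T : measurableType d} {R : realType}
    (mu : {measure set T -> \bar R}) (D : set T) (f : T -> \bar R) :
  measurable D -> mu D != 0 -> measurable_fun D f -> (forall x, D x -> 0 < f x) ->
  0 < \int[mu]_(x in D) f x.
Proof.
move=> mD muD mf f_gt0; rewrite lt0e integral_ge0 ?andbT; last first.
  by move=> x /f_gt0/ltW.
apply: contra muD => /eqP f0; apply/eqP.
have /(ae_eq_integral_abs mu mD mf).1 [N [mN N0 DN]] :
    \int[mu]_(x in D) `|f x| = 0.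
  by rewrite -f0; apply: eq_integral => x /[!inE] /f_gt0/ltW/gee0_abs.
apply: (subset_measure0 mD mN _ N0) => x Dx; apply: DN => /(_ Dx) fx0.
by have := f_gt0 x Dx; rewrite fx0 ltxx.
Qed.

End ereal_lemmas.

Lemma logistic_cvg (R : realType) (s0 : R) (I : R -> R) : 0 < s0 < 1 ->
  nondecreasing_fun I -> has_ubound (range I) -> (exists t, 0 < I t) ->
  exists Sinf : R,
    (1 + (s0^-1 - 1) * expR (I t))^-1 @[t --> +oo] --> Sinf /\ 0 < Sinf < s0.
Proof.
move=> /andP[s0_gt0 s0_lt1] I_nd I_ub [t It_gt0].
have I_cvg := nondecreasing_cvgr I_nd I_ub; set L := sup (range I) in I_cvg.
have L_gt0 : 0 < L.
  apply: (lt_le_trans It_gt0); apply: sup_upper_bound; last by exists t.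
  by split; [exists (I t), t|].
set c := s0^-1 - 1; have c_gt0 : 0 < c by rewrite subr_gt0 invf_gt1.
have den_gt0 : 0 < 1 + c * expR L by rewrite addr_gt0 // mulr_gt0 // expR_gt0.
exists (1 + c * expR L)^-1; split.
  apply: cvgV; first by rewrite gt_eqF.
  apply: cvgD; first exact: cvg_cst.
  by apply: cvgMl_tmp; exact: cvg_comp I_cvg (@continuous_expR R L).
rewrite invr_gt0 den_gt0 /= invf_plt ?posrE //.
by rewrite -[X in X < _](subrK 1) addrC ltrD2l -/c ltr_pMr // expR_gt1.
Qed.

Section SI_model.
Context {R : realType} {d : measure_display} {Omega : measurableType d}
  (Pr : probability Omega R) (phi : R -> R) (P : R -> Omega -> R) (M : R).
Local Notation leb := (@lebesgue_measure R).
Local Notation halfline := ([set` `[(0:R), +oo[] : set R).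

Hypothesis phi_gt0 : forall t, 0 <= t -> 0 < phi t.
Hypothesis mphi : measurable_fun halfline phi.

Let mhalfline : measurable halfline. Proof. exact: measurable_itv. Qed.

Let phi_ge0 r : halfline r -> 0 <= phi r.
Proof. by rewrite /= in_itv /= andbT => /phi_gt0/ltW. Qed.

Definition cell_weight k j :=
  (\int[leb]_(r in halfline) (phi r * \1_(gridcell k j) r)%:E)%E.

Let measurable_phi_cell k j :
  measurable_fun halfline (fun r => (phi r * \1_(gridcell k j) r)%:E).
Proof.
apply/measurable_EFinP/measurable_funM => //.
by apply: measurable_indic; rewrite /gridcell; exact: measurable_itv.
Qed.

Let phi_cell_ge0 k j r : halfline r -> (0 <= (phi r * \1_(gridcell k j) r)%:E)%E.
Proof. by move=> /phi_ge0 phir; rewrite lee_fin mulr_ge0 ?indicE. Qed.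

Lemma cell_weight_ge0 k j : (0 <= cell_weight k j)%E.
Proof. by apply: integral_ge0 => r; exact: phi_cell_ge0. Qed.

Lemma measurable_phi_step k x :
  measurable_fun halfline (fun r => (phi r * step_fun k x r)%:E).
Proof.
by apply/measurable_EFinP/measurable_funM => //; exact: measurable_step_fun.
Qed.

Lemma phi_step_ge0 k x r : (forall j, 0 <= x j) -> halfline r ->
  (0 <= (phi r * step_fun k x r)%:E)%E.
Proof. by move=> x0 /phi_ge0 phir; rewrite lee_fin mulr_ge0 ?step_fun_ge0. Qed.

Lemma integral_phi_step k x : (forall j, 0 <= x j) ->
  (\int[leb]_(r in halfline) (phi r * step_fun k x r)%:E =
   \sum_(j < k * k.+1) cell_weight k j * (x j)%:E)%E.
Proof.
move=> x0; under eq_integral => r _.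
  rewrite /step_fun mulr_sumr -sumEFin.
  under eq_bigr => j _ do rewrite mulrA EFinM.
  over.
rewrite /= ge0_integral_sum //.
- apply: eq_bigr => j _; rewrite ge0_integralZr ?lee_fin //.
    exact: measurable_phi_cell.
  by move=> r; exact: phi_cell_ge0.
- move=> j; apply: emeasurable_funM; [exact: measurable_phi_cell|].
  exact: measurable_cst.
- by move=> j r /(phi_cell_ge0 k j) cell0; rewrite mule_ge0 // lee_fin.
Qed.

Lemma sum_cell_weight_le k :
  (\sum_(j < k * k.+1) cell_weight k j <= \int[leb]_(r in halfline) (phi r)%:E)%E.
Proof.
have := @integral_phi_step k (fun=> 1) (fun=> ler01).
under eq_bigr do rewrite mule1.
move=> <-; apply: ge0_le_integral => //.
- by move=> r; apply: phi_step_ge0 => _.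
- exact: measurable_phi_step.
- exact/measurable_EFinP.
move=> r /[dup] /phi_ge0 phir; rewrite /= in_itv /= andbT => r0.
by rewrite lee_fin step_funE //; case: ifP; rewrite ?mulr1 ?mulr0.
Qed.

Hypothesis mP : forall t, 0 <= t -> measurable_fun setT (P t).
Hypothesis P_gt0_ae : {ae Pr, forall w t, 0 <= t -> 0 < P t w}.
Hypothesis EP_le : forall t, 0 <= t -> (\int[Pr]_w (P t w)%:E <= M%:E)%E.
Hypothesis phi_integrable : leb.-integrable halfline (EFin \o phi).

(* P is positive only almost surely: truncating at 0 makes every
   approximation nonnegative at every outcome. *)
Definition grid_sample k w j := maxr (P (gridpt k j) w) 0.

Definition approx_integral k w :=
  (\int[leb]_(r in halfline) (phi r * step_fun k (grid_sample k w) r)%:E)%E.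

Definition approx_liminf w := limn_einf (approx_integral ^~ w).

Lemma grid_sample_ge0 k w j : 0 <= grid_sample k w j.
Proof. by rewrite /grid_sample le_max lexx orbT. Qed.

Lemma measurable_grid_sample k j : measurable_fun setT (grid_sample k ^~ j).
Proof. by apply: measurable_maxr => //; apply: mP; exact: gridpt_ge0. Qed.

Lemma approx_integralE k w : approx_integral k w =
  (\sum_(j < k * k.+1) cell_weight k j * (grid_sample k w j)%:E)%E.
Proof. exact/integral_phi_step/grid_sample_ge0. Qed.

Lemma approx_integral_ge0 k w : (0 <= approx_integral k w)%E.
Proof.
by apply: integral_ge0 => r; apply: phi_step_ge0; exact: grid_sample_ge0.
Qed.

Lemma measurable_approx_integral k : measurable_fun setT (approx_integral k).
Proof.
rewrite (funext (approx_integralE k)).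
apply: emeasurable_sum => j; apply: emeasurable_funM; first exact: measurable_cst.
exact/measurable_EFinP/measurable_grid_sample.
Qed.

Lemma expectation_grid_sample_le k j :
  (\int[Pr]_w (grid_sample k w j)%:E <= M%:E)%E.
Proof.
have t0 : 0 <= gridpt k j :> R by exact: gridpt_ge0.
rewrite (ae_eq_integral (fun w => (P (gridpt k j) w)%:E)) ?EP_le //.
- exact/measurable_EFinP/measurable_grid_sample.
- exact/measurable_EFinP/mP.
apply: filterS P_gt0_ae => w P_gt0 _.
by rewrite /grid_sample max_l // ltW // P_gt0.
Qed.

Lemma expectation_approx_integral_le k :
  (\int[Pr]_w approx_integral k w <=
   (\int[leb]_(r in halfline) (phi r)%:E) * M%:E)%E.
Proof.
have M_ge0 : (0 <= M%:E)%E.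
  apply: le_trans (expectation_grid_sample_le k 0).
  by apply: integral_ge0 => w _; rewrite lee_fin grid_sample_ge0.
under eq_integral do rewrite approx_integralE.
rewrite ge0_integral_sum //.
- apply: le_trans (lee_wpmul2r M_ge0 (sum_cell_weight_le k)).
  rewrite ge0_sume_distrl; last by move=> j _; exact: cell_weight_ge0.
  apply: lee_sum => j _; rewrite ge0_integralZl //.
  + exact/lee_wpmul2l/expectation_grid_sample_le/cell_weight_ge0.
  + exact/measurable_EFinP/measurable_grid_sample.
  + by move=> w _; rewrite lee_fin grid_sample_ge0.
  + exact: cell_weight_ge0.
- move=> j; apply: emeasurable_funM; first exact: measurable_cst.
  exact/measurable_EFinP/measurable_grid_sample.
- by move=> j w _; rewrite mule_ge0 ?cell_weight_ge0 ?lee_fin ?grid_sample_ge0.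
Qed.

Lemma measurable_approx_liminf : measurable_fun setT approx_liminf.
Proof.
have -> : approx_liminf = fun w => (- limn_esup (fun k => - approx_integral k w))%E.
  apply/funext => w; rewrite -limn_einfN /approx_liminf; congr limn_einf.
  by apply/funext => k /=; rewrite oppeK.
apply: measurableT_comp => //; apply: measurable_fun_limn_esup => k.
exact/measurableT_comp/measurable_approx_integral.
Qed.

Lemma approx_liminf_fin_ae : {ae Pr, forall w, approx_liminf w \is a fin_num}.
Proof.
have phi_int_fin : (\int[leb]_(r in halfline) (phi r)%:E \is a fin_num)%E.
  rewrite fin_num_abs; case/integrableP: phi_integrable => mphiE.
  exact: le_lt_trans (le_abse_integral leb mhalfline mphiE).
have approx_liminf_ge0 w : (0 <= approx_liminf w)%E.
  rewrite -(limn_einf_cst 0%E).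
  by apply: lee_limn_einf => k; exact: approx_integral_ge0.
have : Pr.-integrable setT approx_liminf.
  apply/integrableP; split; first exact: measurable_approx_liminf.
  under eq_integral do rewrite gee0_abs //.
  apply: (le_lt_trans (fatou _ _ _ _)) => //.
  - by move=> k; exact: measurable_approx_integral.
  - by move=> k w _; exact: approx_integral_ge0.
  apply: (@le_lt_trans _ _ ((\int[leb]_(r in halfline) (phi r)%:E) * M%:E)%E).
    rewrite -[X in (_ <= X)%E]limn_einf_cst.
    by apply: lee_limn_einf => k; exact: expectation_approx_integral_le.
  by rewrite ltey_eq fin_numM.
by move=> /(integrable_ae measurableT); apply: filterS => w; apply.
Qed.

Definition regular_path w := {within `[(0:R), +oo[, continuous (fun t => P t w)} /\
  (forall t, 0 <= t -> 0 < P t w).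

Section regular_path.
Variable w : Omega.
Hypothesis w_regular : regular_path w.

Let path_gt0 t : 0 <= t -> 0 < P t w. Proof. by case: w_regular => _; apply. Qed.

Let phi_path_gt0 r : halfline r -> 0 < phi r * P r w.
Proof.
by rewrite /= in_itv /= andbT => r0; rewrite mulr_gt0 ?phi_gt0 ?path_gt0.
Qed.

Let measurable_phi_path : measurable_fun halfline (fun r => (phi r * P r w)%:E).
Proof.
apply/measurable_EFinP/measurable_funM => //.
by apply: subspace_continuous_measurable_fun => //; case: w_regular.
Qed.

Let halfline_itv (t : R) : `[0, t] `<=` halfline.
Proof. by move=> r /=; rewrite !in_itv /= => /andP[-> _]. Qed.

Lemma phi_step_path_cvg r : 0 <= r ->
  (phi r * step_fun k (grid_sample k w) r)%:E @[k --> \oo] --> (phi r * P r w)%:E.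
Proof.
move=> r0; apply/cvg_EFin; first exact: nearW.
apply: cvgMl_tmp; have [path_cont _] := w_regular.
have -> : (fun k => step_fun k (grid_sample k w) r) =
    (fun k => step_fun k ((fun t => P t w) \o gridpt k) r).
  apply/funext => k; congr step_fun; apply/funext => j.
  by rewrite /grid_sample max_l // ltW // path_gt0 // gridpt_ge0.
exact: step_fun_cvg.
Qed.

Lemma path_integral_le_approx_liminf (t : R) :
  (\int[leb]_(r in `[0%R, t]) (phi r * P r w)%:E <= approx_liminf w)%E.
Proof.
have mitv : measurable `[0, t]%classic by exact: measurable_itv.
have -> : (\int[leb]_(r in `[0%R, t]) (phi r * P r w)%:E =
    \int[leb]_(r in `[0%R, t])
      limn_einf (fun k => (phi r * step_fun k (grid_sample k w) r)%:E))%E.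
  apply: eq_integral => r /[!inE] /halfline_itv; rewrite /= in_itv /= andbT => r0.
  by rewrite (cvg_limn_einf_sup (phi_step_path_cvg r r0)).1.
apply: le_trans (fatou leb mitv _ _) _.
- by move=> k; apply: measurable_funS (measurable_phi_step k _).
- by move=> k r /halfline_itv; apply: phi_step_ge0; exact: grid_sample_ge0.
apply: lee_limn_einf => k; apply: ge0_subset_integral => //.
- exact: measurable_phi_step.
- by move=> r; apply: phi_step_ge0; exact: grid_sample_ge0.
Qed.

Lemma path_integral_gt0 : (0 < \int[leb]_(r in `[0%R, 1%R]) (phi r * P r w)%:E)%E.
Proof.
apply: integral_gt0.
- exact: measurable_itv.
- have itv01 : leb `[0%R, 1%R] = 1%E.
    by rewrite lebesgue_measure_itv /= lte_fin ltr01 oppr0 adde0.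
  by move: itv01 => /= ->; exact: oner_neq0.
- exact: measurable_funS measurable_phi_path.
- by move=> r /halfline_itv /phi_path_gt0; rewrite lte_fin.
Qed.

Lemma SI_S_cvg (s0 : R) : 0 < s0 < 1 -> approx_liminf w \is a fin_num ->
  exists Sinf : R, SI_S s0 phi P t w @[t --> +oo] --> Sinf /\ 0 < Sinf < s0.
Proof.
move=> s0_01 liminf_fin.
have phi_path_ge0 (t r : R) : `[0%R, t]%classic r -> (0 <= (phi r * P r w)%:E)%E.
  by move=> /halfline_itv /phi_path_gt0/ltW; rewrite lee_fin.
have integral_fin (t : R) :
    (\int[leb]_(r in `[0%R, t]) (phi r * P r w)%:E \is a fin_num)%E.
  rewrite ge0_fin_numE; last by apply: integral_ge0 => r; exact: phi_path_ge0.
  apply: le_lt_trans (path_integral_le_approx_liminf t) _.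
  by rewrite ltey_eq liminf_fin.
pose I t := Rintegral leb `[0%R, t] (fun r => phi r * P r w).
apply: (@logistic_cvg R s0 I) => //.
- move=> a b ab; apply: fine_le => //; apply: ge0_subset_integral => //.
  + exact: measurable_funS (halfline_itv b) measurable_phi_path.
  + by move=> r; exact: phi_path_ge0.
  + by move=> r /=; rewrite !in_itv /= => /andP[-> /le_trans]; apply.
- exists (fine (approx_liminf w)) => _ [t _ <-].
  by apply: fine_le => //; exact: path_integral_le_approx_liminf.
- by exists 1; apply: fine_gt0; rewrite path_integral_gt0 ltey_eq integral_fin.
Qed.

End regular_path.

End SI_model.

Theorem mainTheorem2 (R : realType) (d : measure_display) (Omega : measurableType d)
  (Pr : probability Omega R) (s0 : R) (phi : R -> R) (P : R -> Omega -> R) (M : R) :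
  0 < s0 < 1 ->
  (forall t, 0 <= t -> 0 < phi t) ->
  measurable_fun `[(0:R), +oo[ phi ->
  (@lebesgue_measure R).-integrable `[(0:R), +oo[ (EFin \o phi) ->
  (forall t, 0 <= t -> measurable_fun setT (P t)) ->
  {ae Pr, forall w, {within `[(0:R), +oo[, continuous (fun t => P t w)} /\
                    (forall t, 0 <= t -> 0 < P t w)} ->
  (forall t, 0 <= t -> (\int[Pr]_w (P t w)%:E <= M%:E)%E) ->
  {ae Pr, forall w, exists Sinf : R,
     SI_S s0 phi P t w @[t --> +oo] --> Sinf /\ 0 < Sinf < s0}.
Proof.
move=> s0_01 phi_gt0 mphi phi_integrable mP regular_ae EP_le.
have P_gt0_ae : {ae Pr, forall w t, 0 <= t -> 0 < P t w}.
  by apply: filterS regular_ae => w [].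
have liminf_fin_ae := @approx_liminf_fin_ae _ _ _ Pr phi P M
  phi_gt0 mphi mP P_gt0_ae EP_le phi_integrable.
apply: filterS2 regular_ae liminf_fin_ae => w w_regular liminf_fin.
exact: SI_S_cvg.
Qed.
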